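(* The variety of superintegrable systems $\mathcal V\subset\mathbb P^9$ is, as a set, the union of the following six classes of points. For a point, write $(D,A_z,B_w)$ for its associated polynomials; parameters below are complex numbers, and the point is the one whose $(D,A_z,B_w)$ are as listed (provided not all $a_{ij}$ vanish). (1) $\mathring{\mathcal V}_{(1,1,1)}$: either $D=(a_1z+c_1)(a_2z+b_2w+c_2)(b_3w+c_3)$ with $a_1b_2c_3-a_1c_2b_3+c_1a_2b_3=0$, $a_1\neq0$, $b_3\neq0$, $A_z=a_1a_2(b_3w+c_3)^2/b_3$, $B_w=b_2b_3(a_1z+c_1)^2/a_1$; or $D=a_2z+b_2w+c_2$ with $a_2\ne0\ne b_2$, $A_z=-a_2^2/b_2$, $B_w=-b_2^2/a_2$. (2) $\mathring{\mathcal V}_{(11,0,1)}$: $D=(a_1z+c_1)(a_2z+c_2)(b_3w+c_3)$ with $b_3\neq0$, $A_z=a_1a_2(b_3w+c_3)^2/b_3$, $B_w=0$. (3) $\mathcal V_{(11,0,0)}$: $D=(a_1z+c_1)(a_2z+c_2)$, $A_z=2a_1a_2w+t$ with $t$ arbitrary, $B_w=0$. (4) $\mathring{\mathcal V}_{(0,11,0)}$: $D=(a_1z+b_1w+c_1)(a_3z+b_3w+c_3)$ with $a_1b_3+b_1a_3=0$, $a_1a_3b_1b_3\neq0$, $A_z=a_1a_3(2w+c_3/b_3+c_1/b_1)$, $B_w=b_1b_3(2z+c_3/a_3+c_1/a_1)$. (5) $\mathring{\mathcal V}_{(1,0,11)}$ and (6) $\mathcal V_{(0,0,11)}$: the images of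 classes (2) and (3), respectively, under conjugation $a_{ij}\mapsto a_{ji}$ (equivalently, exchanging $z\leftrightarrow w$ and $A_z\leftrightarrow B_w$).
   Context: Homogeneous coordinates $a_{ij}$ ($i,j\ge0$, $i+j\le3$) on $\mathbb P^9$. Associated polynomials: $D(z,w)=\sum_{0\le i,j\le2,(i,j)\ne(2,2)}a_{ij}z^iw^j$, $A_z(w)=a_{21}w^2+2a_{20}w+a_{30}$, $B_w(z)=a_{12}z^2+2a_{02}z+a_{03}$ (names of polynomials; subscripts on $D$ denote partial derivatives). The variety of superintegrable systems $\mathcal V$ is the set of points satisfying the Plücker relations $a_{03}a_{21}-a_{02}a_{11}+a_{01}a_{12}=0$, $a_{03}a_{20}-a_{02}a_{10}+a_{00}a_{12}=0$, $a_{03}a_{30}-a_{01}a_{10}+a_{00}a_{11}=0$, $a_{02}a_{30}-a_{01}a_{20}+a_{00}a_{21}=0$, $a_{12}a_{30}-a_{11}a_{20}+a_{10}a_{21}=0$ and the superintegrability conditions, i.e. the polynomial identities in $z,w$: $3A_zDD_{ww}-2A_zB_wD_z-2A_zD_w^2+DD_wD_{zz}=0$, $3B_wDD_{zz}-2A_zB_wD_w-2B_wD_z^2+DD_zD_{ww}=0$, $2D^2D_{zz}D_{ww}-B_wDD_zD_{zz}-A_zDD_wD_{ww}-A_zB_wD_zD_w+A_z^2B_w^2=0$. *)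

From HB Require Import structures.
From mathcomp Require Import all_boot all_order all_algebra.
From mathcomp Require Import reals.
From mathcomp.real_closed Require Import complex.
Set Implicit Arguments.
Unset Strict Implicit.
Unset Printing Implicit Defensive.
Import Order.TTheory GRing.Theory Num.Theory.
Local Open Scope ring_scope.

(* Homogeneous coordinates a_ij (i,j >= 0, i+j <= 3) of a point of P^9,
   given by a representative vector in C^10. *)
Record coords (C : Type) := Coords {
  a00 : C; a01 : C; a02 : C; a03 : C;
  a10 : C; a11 : C; a12 : C;
  a20 : C; a21 : C;
  a30 : C }.

Section Bivariate.
Variable C : fieldType.

(* Bivariate polynomials in z (outer variable) and w (inner variable). *)
Definition bipoly := {poly {poly C}}.
Definition Zv : bipoly := 'X.
Definition Wv : bipoly := polyC 'X.
Definition cst (c : C) : bipoly := polyC (polyC c).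

Definition dz (p : bipoly) : bipoly := deriv p.
Definition dw (p : bipoly) : bipoly := map_poly (@deriv C) p.

Definition nonzero_coords (a : coords C) : Prop :=
  ~ (a00 a = 0 /\ a01 a = 0 /\ a02 a = 0 /\ a03 a = 0 /\ a10 a = 0 /\
     a11 a = 0 /\ a12 a = 0 /\ a20 a = 0 /\ a21 a = 0 /\ a30 a = 0).

Definition Dpol (a : coords C) : bipoly :=
    cst (a00 a) + cst (a01 a) * Wv + cst (a02 a) * Wv ^+ 2
  + cst (a10 a) * Zv + cst (a11 a) * Zv * Wv + cst (a12 a) * Zv * Wv ^+ 2
  + cst (a20 a) * Zv ^+ 2 + cst (a21 a) * Zv ^+ 2 * Wv.

Definition Apol (a : coords C) : bipoly :=
  cst (a21 a) * Wv ^+ 2 + 2%:R * cst (a20 a) * Wv + cst (a30 a).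

Definition Bpol (a : coords C) : bipoly :=
  cst (a12 a) * Zv ^+ 2 + 2%:R * cst (a02 a) * Zv + cst (a03 a).

Definition conj_coords (a : coords C) : coords C :=
  Coords (a00 a) (a10 a) (a20 a) (a30 a) (a01 a) (a11 a) (a21 a)
         (a02 a) (a12 a) (a03 a).

Definition plucker (a : coords C) : Prop :=
  [/\ a03 a * a21 a - a02 a * a11 a + a01 a * a12 a = 0,
      a03 a * a20 a - a02 a * a10 a + a00 a * a12 a = 0,
      a03 a * a30 a - a01 a * a10 a + a00 a * a11 a = 0,
      a02 a * a30 a - a01 a * a20 a + a00 a * a21 a = 0 &
      a12 a * a30 a - a11 a * a20 a + a10 a * a21 a = 0].

Definition superint (a : coords C) : Prop :=
  let D := Dpol a in let A := Apol a in let B := Bpol a in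
  let Dz := dz D in let Dw := dw D in
  let Dzz := dz (dz D) in let Dww := dw (dw D) in
  [/\ 3%:R * A * D * Dww - 2%:R * A * B * Dz - 2%:R * A * Dw ^+ 2
        + D * Dw * Dzz = 0,
      3%:R * B * D * Dzz - 2%:R * A * B * Dw - 2%:R * B * Dz ^+ 2
        + D * Dz * Dww = 0 &
      2%:R * D ^+ 2 * Dzz * Dww - B * D * Dz * Dzz - A * D * Dw * Dww
        - A * B * Dz * Dw + A ^+ 2 * B ^+ 2 = 0].

(* The variety of superintegrable systems (affine cone over V in P^9). *)
Definition in_V (a : coords C) : Prop := plucker a /\ superint a.

Definition has_DAB (a : coords C) (D A B : bipoly) : Prop :=
  [/\ Dpol a = D, Apol a = A & Bpol a = B].

Definition class_111 (a : coords C) : Prop :=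
  (exists a1 c1 a2 b2 c2 b3 c3 : C,
     [/\ a1 * b2 * c3 - a1 * c2 * b3 + c1 * a2 * b3 = 0, a1 != 0, b3 != 0 &
      has_DAB a
        ((cst a1 * Zv + cst c1) * (cst a2 * Zv + cst b2 * Wv + cst c2)
           * (cst b3 * Wv + cst c3))
        (cst (a1 * a2 / b3) * (cst b3 * Wv + cst c3) ^+ 2)
        (cst (b2 * b3 / a1) * (cst a1 * Zv + cst c1) ^+ 2)])
  \/
  (exists a2 b2 c2 : C,
     [/\ a2 != 0, b2 != 0 &
      has_DAB a (cst a2 * Zv + cst b2 * Wv + cst c2)
        (cst (- (a2 ^+ 2 / b2))) (cst (- (b2 ^+ 2 / a2)))]).

Definition class_11_0_1 (a : coords C) : Prop :=
  exists a1 c1 a2 c2 b3 c3 : C,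
    b3 != 0 /\
    has_DAB a
      ((cst a1 * Zv + cst c1) * (cst a2 * Zv + cst c2) * (cst b3 * Wv + cst c3))
      (cst (a1 * a2 / b3) * (cst b3 * Wv + cst c3) ^+ 2)
      0.

Definition class_11_0_0 (a : coords C) : Prop :=
  exists a1 c1 a2 c2 t : C,
    has_DAB a ((cst a1 * Zv + cst c1) * (cst a2 * Zv + cst c2))
      (cst (2%:R * a1 * a2) * Wv + cst t) 0.

Definition class_0_11_0 (a : coords C) : Prop :=
  exists a1 b1 c1 a3 b3 c3 : C,
    [/\ a1 * b3 + b1 * a3 = 0, a1 * a3 * b1 * b3 != 0 &
     has_DAB a
       ((cst a1 * Zv + cst b1 * Wv + cst c1) * (cst a3 * Zv + cst b3 * Wv + cst c3))
       (cst (a1 * a3) * (cst 2%:R * Wv + cst (c3 / b3 + c1 / b1)))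
       (cst (b1 * b3) * (cst 2%:R * Zv + cst (c3 / a3 + c1 / a1)))].

Definition class_1_0_11 (a : coords C) : Prop := class_11_0_1 (conj_coords a).
Definition class_0_0_11 (a : coords C) : Prop := class_11_0_0 (conj_coords a).

End Bivariate.

From HB Require Import structures.
From mathcomp Require Import all_boot all_order all_algebra.
From mathcomp Require Import reals ring.
From mathcomp.real_closed Require Import complex.
Import GRing.Theory Num.Theory.
Set Implicit Arguments.
Unset Strict Implicit.
Unset Printing Implicit Defensive.
Local Open Scope ring_scope.

(* Superintegrability is a polynomial identity in (z, w), hence equivalent to
   its pointwise form, and a point is determined by its (D, A_z, B_w).  So each
   of the six classes lies in V because the Plucker relations and the three
   identities hold, by field arithmetic, at the explicit coordinates of its
   members.  Conversely, a few coefficients of the first identity, read off as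
   finite differences of its values, together with the Plucker relations force
   class (1) when a21 a12 <> 0, class (2) or its conjugate (5) when exactly one
   of a21, a12 vanishes, and, when both vanish, one of the remaining classes
   after a case analysis on a11, a20 and a02; the linear factors of D come
   from roots of quadratics over the algebraically closed field. *)

Lemma solve_linear (F : fieldType) (k x v e : F) :
  k != 0 -> e = 0 -> e = k * (x - v) -> x = v.
Proof. by move=> k0 -> /esym/eqP; rewrite mulf_eq0 (negbTE k0) subr_eq0 => /eqP. Qed.

Section BivariatePolynomials.
Variable F : fieldType.
Implicit Types (p q : bipoly F) (c : F) (a : coords F).

Lemma dwD p q : dw (p + q) = dw p + dw q.
Proof. by apply/polyP => i; rewrite !(coefD, coef_map) /= derivD. Qed.

Lemma dwMn p n : dw (p *+ n) = dw p *+ n.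
Proof. by apply/polyP => i; rewrite !(coefMn, coef_map) /= derivMn. Qed.

Lemma dwM p q : dw (p * q) = dw p * q + p * dw q.
Proof.
apply/polyP => i; rewrite coef_map /= coefD !coefM raddf_sum -big_split /=.
by apply: eq_bigr => j _; rewrite derivM !coef_map.
Qed.

Lemma dw_cst c : dw (cst c) = 0.
Proof. by rewrite /dw /cst map_polyC /= derivC. Qed.

Lemma dwZ : dw (Zv F) = 0.
Proof.
apply/polyP => i; rewrite coef_map /= coefX coef0.
by case: (i == 1)%N; rewrite ?derivC ?deriv0.
Qed.

Lemma dwW : dw (Wv F) = 1.
Proof. by rewrite /dw /Wv map_polyC /= derivX. Qed.

Lemma dz_Dpol a : dz (Dpol a) =
  cst (a10 a) + cst (a11 a) * Wv F + cst (a12 a) * Wv F ^+ 2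
  + (cst (a20 a) * Zv F) *+ 2 + (cst (a21 a) * Zv F * Wv F) *+ 2.
Proof. by rewrite /Dpol /dz /cst /Zv /Wv !expr2 !derivE; ring. Qed.

Lemma dw_Dpol a : dw (Dpol a) =
  cst (a01 a) + (cst (a02 a) * Wv F) *+ 2 + cst (a11 a) * Zv F
  + (cst (a12 a) * Zv F * Wv F) *+ 2 + cst (a21 a) * Zv F ^+ 2.
Proof. by rewrite /Dpol !expr2 !(dwD, dwM, dw_cst, dwZ, dwW); ring. Qed.

Lemma dzz_Dpol a : dz (dz (Dpol a)) = cst (a20 a) *+ 2 + (cst (a21 a) * Wv F) *+ 2.
Proof. by rewrite dz_Dpol /dz /cst /Zv /Wv !expr2 !derivE; ring. Qed.

Lemma dww_Dpol a : dw (dw (Dpol a)) = cst (a02 a) *+ 2 + (cst (a12 a) * Zv F) *+ 2.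
Proof. by rewrite dw_Dpol !expr2 !(dwD, dwMn, dwM, dw_cst, dwZ, dwW); ring. Qed.

Lemma Dpol_Poly a : Dpol a = Poly [:: Poly [:: a00 a; a01 a; a02 a];
  Poly [:: a10 a; a11 a; a12 a]; Poly [:: a20 a; a21 a]].
Proof.
by rewrite /Dpol /cst /Zv /Wv /= !cons_poly_def !mul0r !add0r !rmorphD !rmorphM /=; ring.
Qed.

End BivariatePolynomials.

Section PointwiseExpressions.
Variable R : comNzRingType.
Implicit Types (A B D Dz Dw Dzz Dww z w : R) (a : coords R).

Definition Dfun a z w := a00 a + a01 a * w + a02 a * w ^+ 2 + a10 a * z + a11 a * z * w
  + a12 a * z * w ^+ 2 + a20 a * z ^+ 2 + a21 a * z ^+ 2 * w.
Definition Afun a w := a21 a * w ^+ 2 + 2%:R * a20 a * w + a30 a.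
Definition Bfun a z := a12 a * z ^+ 2 + 2%:R * a02 a * z + a03 a.
Definition Dzfun a z w :=
  a10 a + a11 a * w + a12 a * w ^+ 2 + 2%:R * a20 a * z + 2%:R * a21 a * z * w.
Definition Dwfun a z w :=
  a01 a + 2%:R * a02 a * w + a11 a * z + 2%:R * a12 a * z * w + a21 a * z ^+ 2.
Definition Dzzfun a w := 2%:R * a20 a + 2%:R * a21 a * w.
Definition Dwwfun a z := 2%:R * a02 a + 2%:R * a12 a * z.

Definition SI1 A B D Dz Dw Dzz Dww : R :=
  3%:R * A * D * Dww - 2%:R * A * B * Dz - 2%:R * A * Dw ^+ 2 + D * Dw * Dzz.
Definition SI2 A B D Dz Dw Dzz Dww : R :=
  3%:R * B * D * Dzz - 2%:R * A * B * Dw - 2%:R * B * Dz ^+ 2 + D * Dz * Dww.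
Definition SI3 A B D Dz Dw Dzz Dww : R :=
  2%:R * D ^+ 2 * Dzz * Dww - B * D * Dz * Dzz - A * D * Dw * Dww
  - A * B * Dz * Dw + A ^+ 2 * B ^+ 2.

Definition si1 a z w := SI1 (Afun a w) (Bfun a z) (Dfun a z w) (Dzfun a z w)
  (Dwfun a z w) (Dzzfun a w) (Dwwfun a z).
Definition si2 a z w := SI2 (Afun a w) (Bfun a z) (Dfun a z w) (Dzfun a z w)
  (Dwfun a z w) (Dzzfun a w) (Dwwfun a z).
Definition si3 a z w := SI3 (Afun a w) (Bfun a z) (Dfun a z w) (Dzfun a z w)
  (Dwfun a z w) (Dzzfun a w) (Dwwfun a z).

End PointwiseExpressions.

Ltac unfold_si :=
  rewrite /si1 /si2 /si3 /SI1 /SI2 /SI3 /Afun /Bfun /Dfun /Dzfun /Dwfun /Dzzfun /Dwwfun /=.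

Section Conjugation.
Variable F : fieldType.
Implicit Types (z w : F) (a : coords F).

Lemma conj_coordsK : involutive (@conj_coords F).
Proof. by case. Qed.

Lemma plucker_conj a : plucker a -> plucker (conj_coords a).
Proof.
case: a => ? ? ? ? ? ? ? ? ? ? [/= e1 e2 e3 e4 e5].
by split=> /=; [rewrite -e5 | rewrite -e4 | rewrite -e3 | rewrite -e2 | rewrite -e1]; ring.
Qed.

Lemma si_conj a z w :
  [/\ si1 (conj_coords a) z w = si2 a w z, si2 (conj_coords a) z w = si1 a w z &
      si3 (conj_coords a) z w = si3 a w z].
Proof. by unfold_si; split; ring. Qed.

End Conjugation.

Lemma rmorph_SI (R S : comNzRingType) (f : {rmorphism R -> S})
    (A B D Dz Dw Dzz Dww : R) :
  [/\ f (SI1 A B D Dz Dw Dzz Dww) = SI1 (f A) (f B) (f D) (f Dz) (f Dw) (f Dzz) (f Dww),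
      f (SI2 A B D Dz Dw Dzz Dww) = SI2 (f A) (f B) (f D) (f Dz) (f Dw) (f Dzz) (f Dww) &
      f (SI3 A B D Dz Dw Dzz Dww) = SI3 (f A) (f B) (f D) (f Dz) (f Dw) (f Dzz) (f Dww)].
Proof.
rewrite /SI1 /SI2 /SI3.
by split; rewrite !(rmorphB, rmorphD, rmorphN, rmorphM, rmorphXn, rmorph1); ring.
Qed.

Lemma poly_eq0_of_roots (R : idomainType) (p : {poly R}) (f : nat -> R) :
  injective f -> (forall n, root p (f n)) -> p = 0.
Proof.
move=> f_inj p_f; apply: (@roots_geq_poly_eq0 _ _ (map f (iota 0 (size p)))).
- by apply/allP => _ /mapP[n _ ->].
- by rewrite map_inj_uniq ?iota_uniq.
- by rewrite size_map size_iota.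
Qed.

Section Evaluation.
Variable C : numFieldType.
Implicit Types (p q : bipoly C) (z w c : C).

Definition ev z w : {rmorphism bipoly C -> C} := horner_eval w \o horner_eval z%:P.

Lemma ev_cst z w c : ev z w (cst c) = c.
Proof. by rewrite /= /cst !horner_evalE !hornerC. Qed.

Lemma ev_Zv z w : ev z w (Zv C) = z.
Proof. by rewrite /= /Zv !horner_evalE hornerX hornerC. Qed.

Lemma ev_Wv z w : ev z w (Wv C) = w.
Proof. by rewrite /= /Wv !horner_evalE hornerC hornerX. Qed.

Lemma ev_inj p q : (forall z w, ev z w p = ev z w q) -> p = q.
Proof.
move=> epq; apply/eqP; rewrite -subr_eq0; apply/eqP.
have {}epq z w : ev z w (p - q) = 0 by rewrite rmorphB epq subrr.
have natr_inj : injective (fun n => n%:R : C) by exact: mulrIn (oner_neq0 C).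
apply: (poly_eq0_of_roots (f := fun n => n%:R%:P)) => [m n /polyC_inj/natr_inj // | m].
apply/eqP/(poly_eq0_of_roots natr_inj) => n.
by apply/eqP; have := epq m%:R n%:R; rewrite /= !horner_evalE.
Qed.

End Evaluation.

Ltac ev_simpl := rewrite ?(rmorph0, rmorph1, rmorphD, rmorphB, rmorphN, rmorphM, rmorphXn,
  rmorphMn, rmorph_nat, ev_cst, ev_Zv, ev_Wv).

Section PointwiseCharacterization.
Variable C : numFieldType.
Implicit Types (a b : coords C).

Lemma ev_DAB a z w :
  [/\ ev z w (Dpol a) = Dfun a z w, ev z w (Apol a) = Afun a w & ev z w (Bpol a) = Bfun a z].
Proof. by split; rewrite /Dpol /Apol /Bpol; ev_simpl. Qed.

Lemma ev_partials a z w :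
  [/\ ev z w (dz (Dpol a)) = Dzfun a z w, ev z w (dw (Dpol a)) = Dwfun a z w,
      ev z w (dz (dz (Dpol a))) = Dzzfun a w & ev z w (dw (dw (Dpol a))) = Dwwfun a z].
Proof.
split; rewrite ?dzz_Dpol ?dww_Dpol ?dz_Dpol ?dw_Dpol; ev_simpl;
  by rewrite /Dzfun /Dwfun /Dzzfun /Dwwfun; ring.
Qed.

Lemma superint_pointwise a :
  superint a <-> forall z w, [/\ si1 a z w = 0, si2 a z w = 0 & si3 a z w = 0].
Proof.
pose D := Dpol a.
have -> : superint a <->
  [/\ SI1 (Apol a) (Bpol a) D (dz D) (dw D) (dz (dz D)) (dw (dw D)) = 0,
      SI2 (Apol a) (Bpol a) D (dz D) (dw D) (dz (dz D)) (dw (dw D)) = 0 &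
      SI3 (Apol a) (Bpol a) D (dz D) (dw D) (dz (dz D)) (dw (dw D)) = 0] by [].
have ev_si z w :
  [/\ ev z w (SI1 (Apol a) (Bpol a) D (dz D) (dw D) (dz (dz D)) (dw (dw D))) = si1 a z w,
      ev z w (SI2 (Apol a) (Bpol a) D (dz D) (dw D) (dz (dz D)) (dw (dw D))) = si2 a z w &
      ev z w (SI3 (Apol a) (Bpol a) D (dz D) (dw D) (dz (dz D)) (dw (dw D))) = si3 a z w].
  have [-> -> ->] := rmorph_SI (ev z w) (Apol a) (Bpol a) D (dz D) (dw D) (dz (dz D)) (dw (dw D)).
  by have [-> -> ->] := ev_DAB a z w; have [-> -> -> ->] := ev_partials a z w.
split=> [[h1 h2 h3] z w | h].
  by have [<- <- <-] := ev_si z w; rewrite h1 h2 h3 rmorph0.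
by split; apply: ev_inj => z w; have [e1 e2 e3] := ev_si z w; have [f1 f2 f3] := h z w;
  rewrite rmorph0 ?e1 ?e2 ?e3.
Qed.

Lemma superint_conj a : superint a -> superint (conj_coords a).
Proof.
rewrite !superint_pointwise => h z w; have [-> -> ->] := si_conj a z w.
by have [? ? ?] := h w z.
Qed.

Lemma in_V_conj a : in_V a -> in_V (conj_coords a).
Proof. by case=> ? ?; split; [apply: plucker_conj | apply: superint_conj]. Qed.

Lemma eq_coords a b : Dpol a = Dpol b -> Apol a = Apol b -> Bpol a = Bpol b -> a = b.
Proof.
move=> eD eA eB; have cD i j : ((Dpol a)`_i)`_j = ((Dpol b)`_i)`_j by rewrite eD.
move: (cD 0 0) (cD 0 1) (cD 0 2) (cD 1 0) (cD 1 1) (cD 1 2) (cD 2 0) (cD 2 1).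
move: (congr1 (ev 0 0) eA) (congr1 (ev 0 0) eB).
have [_ -> ->] := ev_DAB a 0 0; have [_ -> ->] := ev_DAB b 0 0.
rewrite !Dpol_Poly !coef_Poly /= /Afun /Bfun !(expr0n, mulr0, add0r) /=.
case: a b {eD eA eB cD} => ? ? ? ? ? ? ? ? ? ? [] /= ? ? ? ? ? ? ? ? ? ?.
by move=> -> -> -> -> -> -> -> -> -> ->.
Qed.

Lemma has_DAB_pointwise a D A B :
  (forall z w, [/\ ev z w D = Dfun a z w, ev z w A = Afun a w & ev z w B = Bfun a z]) ->
  has_DAB a D A B.
Proof.
move=> h; split; apply: ev_inj => z w.
all: by case: (h z w) (ev_DAB a z w) => [? ? ?] [? ? ?]; congruence.
Qed.

Lemma coords_of_DAB a b D A B : has_DAB a D A B ->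
  (forall z w, [/\ ev z w D = Dfun b z w, ev z w A = Afun b w & ev z w B = Bfun b z]) ->
  a = b.
Proof.
by move=> [<- <- <-] /has_DAB_pointwise [/esym eD /esym eA /esym eB]; apply: eq_coords.
Qed.

End PointwiseCharacterization.

Section FiniteDifferences.
Variable C : numFieldType.
Implicit Types (a : coords C) (f : C -> C).

Fixpoint fdiff n f := if n is m.+1 then fdiff m (fun t => f (t + 1) - f t) else f 0.

Lemma fdiff_eq0 n f : (forall t, f t = 0) -> fdiff n f = 0.
Proof. by elim: n f => [|n IHn] f f0 //=; apply: IHn => t; rewrite !f0 subrr. Qed.

(* The n-th forward difference at 0 of a polynomial of degree n is n! times its
   leading coefficient; along a line it isolates one coefficient of [si1]. *)
Lemma superint_a30 a : superint a -> a21 a != 0 -> a30 a = a20 a ^+ 2 / a21 a.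
Proof.
move=> /superint_pointwise si h21.
have f0 : fdiff 4 (fun t => si1 a t 0) = 0 by apply: fdiff_eq0 => t; have [] := si t 0.
apply: (solve_linear (k := - 48%:R * a21 a ^+ 2) _ f0).
- by rewrite mulf_neq0 ?oppr_eq0 ?pnatr_eq0 ?expf_neq0.
by rewrite /=; unfold_si; field.
Qed.

Lemma superint_a02 a : superint a -> a21 a != 0 -> a02 a ^+ 2 = a03 a * a12 a.
Proof.
move=> /superint_pointwise si h21.
have f0 : fdiff 4 (fun t => si1 a 0 t) = 0 by apply: fdiff_eq0 => t; have [] := si 0 t.
apply: (solve_linear (k := 48%:R * a21 a) _ f0).
- by rewrite mulf_neq0 ?pnatr_eq0.
by rewrite /=; unfold_si; ring.
Qed.

Lemma superint_a11 a : superint a -> a21 a != 0 -> a12 a != 0 ->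
  a11 a = 2%:R * (a02 a * a21 a ^+ 2 + a12 a ^+ 2 * a20 a) / (a12 a * a21 a).
Proof.
move=> /superint_pointwise si h21 h12.
have f0 : fdiff 5 (fun t => si1 a t t) = 0 by apply: fdiff_eq0 => t; have [] := si t t.
apply: (solve_linear (k := 240%:R * a12 a * a21 a) _ f0).
- by rewrite !mulf_neq0 ?pnatr_eq0.
by rewrite /=; unfold_si; field; rewrite h21 h12.
Qed.

Lemma superint_a30_eq0 a : superint a ->
  a21 a = 0 -> a12 a = 0 -> a20 a = 0 -> a11 a != 0 -> a30 a = 0.
Proof.
move=> /superint_pointwise si h21 h12 h20 h11.
have f0 : fdiff 2 (fun t => si1 a t 0) = 0 by apply: fdiff_eq0 => t; have [] := si t 0.
apply: (solve_linear (k := - 4%:R * a11 a ^+ 2) _ f0).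
- by rewrite mulf_neq0 ?oppr_eq0 ?pnatr_eq0 ?expf_neq0.
by rewrite /=; unfold_si; rewrite h21 h12 h20; ring.
Qed.

End FiniteDifferences.

Definition in_classes (F : fieldType) (a : coords F) :=
  class_111 a \/ class_11_0_1 a \/ class_11_0_0 a \/ class_0_11_0 a \/
  class_1_0_11 a \/ class_0_0_11 a.

Section Backward.
Variable C : numFieldType.
Implicit Types (a : coords C).

Lemma in_V_of_class_111 a : class_111 a -> in_V a.
Proof.
case=> [[a1 [c1 [a2 [b2 [c2 [b3 [c3 [rel a1_neq0 b3_neq0 DAB]]]]]]]] |
        [a2 [b2 [c2 [a2_neq0 b2_neq0 DAB]]]]].
  have e2 : c2 = (a1 * b2 * c3 + c1 * a2 * b3) / (a1 * b3).
    apply: (solve_linear (k := - (a1 * b3)) _ rel); first by rewrite oppr_eq0 mulf_neq0.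
    by field; rewrite a1_neq0 b3_neq0.
  have -> : a = Coords (c1 * c2 * c3) (c1 * (b2 * c3 + c2 * b3)) (c1 * b2 * b3)
      (b2 * b3 * c1 ^+ 2 / a1) (a1 * c2 * c3 + c1 * a2 * c3)
      (a1 * b2 * c3 + a1 * c2 * b3 + c1 * a2 * b3) (a1 * b2 * b3) (a1 * a2 * c3)
      (a1 * a2 * b3) (a1 * a2 * c3 ^+ 2 / b3).
    apply: (coords_of_DAB DAB) => z w; ev_simpl; rewrite /Dfun /Afun /Bfun /=.
    by split; field.
  split; first by split=> /=; rewrite e2; field; rewrite ?a1_neq0 ?b3_neq0.
  apply/superint_pointwise => z w; unfold_si; rewrite e2.
  by split; field; rewrite ?a1_neq0 ?b3_neq0.
have -> : a = Coords c2 b2 0 (- (b2 ^+ 2 / a2)) a2 0 0 0 0 (- (a2 ^+ 2 / b2)).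
  by apply: (coords_of_DAB DAB) => z w; ev_simpl; rewrite /Dfun /Afun /Bfun /=; split; field.
split; first by split=> /=; field; rewrite ?a2_neq0 ?b2_neq0.
by apply/superint_pointwise => z w; unfold_si; split; field; rewrite ?a2_neq0 ?b2_neq0.
Qed.

Lemma in_V_of_class_11_0_1 a : class_11_0_1 a -> in_V a.
Proof.
case=> a1 [c1 [a2 [c2 [b3 [c3 [b3_neq0 DAB]]]]]].
have -> : a = Coords (c1 * c2 * c3) (c1 * c2 * b3) 0 0 ((a1 * c2 + c1 * a2) * c3)
    ((a1 * c2 + c1 * a2) * b3) 0 (a1 * a2 * c3) (a1 * a2 * b3) (a1 * a2 * c3 ^+ 2 / b3).
  by apply: (coords_of_DAB DAB) => z w; ev_simpl; rewrite /Dfun /Afun /Bfun /=; split; field.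
split; first by split=> /=; field.
by apply/superint_pointwise => z w; unfold_si; split; field.
Qed.

Lemma in_V_of_class_11_0_0 a : class_11_0_0 a -> in_V a.
Proof.
case=> a1 [c1 [a2 [c2 [t DAB]]]].
have -> : a = Coords (c1 * c2) 0 0 0 (a1 * c2 + c1 * a2) 0 0 (a1 * a2) 0 t.
  by apply: (coords_of_DAB DAB) => z w; ev_simpl; rewrite /Dfun /Afun /Bfun /=; split; ring.
split; first by split=> /=; ring.
by apply/superint_pointwise => z w; unfold_si; split; ring.
Qed.

Lemma in_V_of_class_0_11_0 a : class_0_11_0 a -> in_V a.
Proof.
case=> a1 [b1 [c1 [a3 [b3 [c3 [opp nz DAB]]]]]].
have [a1_neq0 a3_neq0 b1_neq0 b3_neq0] : [/\ a1 != 0, a3 != 0, b1 != 0 & b3 != 0].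
  by move: nz; rewrite !mulf_eq0 !negb_or => /andP[/andP[/andP[-> ->] ->] ->].
have {opp} e1 : a1 = - (b1 * a3) / b3.
  by apply: (solve_linear b3_neq0 opp); field.
subst a1.
have -> : a = Coords (c1 * c3) (c1 * b3 + b1 * c3) (b1 * b3)
    (b1 * b3 * (c3 / a3 - c1 * b3 / (b1 * a3))) (- (b1 * a3) / b3 * c3 + c1 * a3) 0 0
    (- (b1 * a3) / b3 * a3) 0 (- (b1 * a3) / b3 * a3 * (c3 / b3 + c1 / b1)).
  apply: (coords_of_DAB DAB) => z w; ev_simpl; rewrite /Dfun /Afun /Bfun /=.
  by split; field; rewrite ?a3_neq0 ?b1_neq0 ?b3_neq0.
split; first by split=> /=; field; rewrite ?a3_neq0 ?b1_neq0 ?b3_neq0.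
apply/superint_pointwise => z w; unfold_si.
by split; field; rewrite ?a3_neq0 ?b1_neq0 ?b3_neq0.
Qed.

Lemma in_V_of_in_classes a : in_classes a -> in_V a.
Proof.
have in_V_of_conj (b : coords C) : in_V (conj_coords b) -> in_V b.
  by move=> Vb; rewrite -[b]conj_coordsK; apply: in_V_conj.
case=> [|[|[|[|[]]]]] h.
- exact: in_V_of_class_111.
- exact: in_V_of_class_11_0_1.
- exact: in_V_of_class_11_0_0.
- exact: in_V_of_class_0_11_0.
- exact/in_V_of_conj/in_V_of_class_11_0_1.
- exact/in_V_of_conj/in_V_of_class_11_0_0.
Qed.

End Backward.

Lemma linear_case_solutions (F : fieldType) (u v p q : F) :
  p * q = u * v -> q * (u ^+ 2 + p * v) = 0 -> p * (u * q + v ^+ 2) = 0 ->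
  [\/ u = 0 /\ p = 0, v = 0 /\ q = 0 |
      [/\ u != 0, v != 0, p = - (u ^+ 2 / v) & q = - (v ^+ 2 / u)]].
Proof.
move=> pq e1 e2.
have [u0 | u_neq0] := eqVneq u 0.
  have [p0 | p_neq0] := eqVneq p 0; first by constructor 1.
  have q0 : q = 0.
    by apply: (solve_linear p_neq0 (e := p * q)); rewrite ?subr0 // pq u0 mul0r.
  constructor 2; split=> //; apply/eqP; rewrite -sqrf_eq0.
  by move: e2; rewrite u0 mul0r add0r => /eqP; rewrite mulf_eq0 (negbTE p_neq0).
have [v0 | v_neq0] := eqVneq v 0.
  constructor 2; split=> //; move: e1; rewrite v0 mulr0 addr0 => /eqP.
  by rewrite mulf_eq0 sqrf_eq0 (negbTE u_neq0) orbF => /eqP.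
have : p * q != 0 by rewrite pq mulf_neq0.
rewrite mulf_eq0 negb_or => /andP[p_neq0 q_neq0].
constructor 3; split=> //.
  by apply: (solve_linear (k := q * v) _ e1); [rewrite mulf_neq0 | field].
by apply: (solve_linear (k := p * u) _ e2); [rewrite mulf_neq0 | field].
Qed.

Section Forward.
Variable C : numClosedFieldType.
Implicit Types (a : coords C).

Lemma factor_quadratic (x y t : C) : x != 0 ->
  exists r1 r2, y = - x * (r1 + r2) /\ t = x * r1 * r2.
Proof.
move=> x_neq0; pose s := sqrtC (y ^+ 2 - 4%:R * x * t).
have s2 : s ^+ 2 = y ^+ 2 - 4%:R * x * t by rewrite sqrtCK.
have -> : t = (y ^+ 2 - s ^+ 2) / (4%:R * x) by rewrite s2; field.
by exists ((- y + s) / (2%:R * x)), ((- y - s) / (2%:R * x)); split; field.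
Qed.

Lemma class_111_of_in_V a : in_V a -> a21 a != 0 -> a12 a != 0 -> class_111 a.
Proof.
move=> [[p1 p2 _ _ p5] si] h21 h12.
have e30 := superint_a30 si h21; have e11 := superint_a11 si h21 h12.
have e03 : a03 a = a02 a ^+ 2 / a12 a by rewrite superint_a02 //; field.
have e10 : a10 a = (a11 a * a20 a - a12 a * a30 a) / a21 a by apply: (solve_linear h21 p5); field.
have e01 : a01 a = (a02 a * a11 a - a03 a * a21 a) / a12 a by apply: (solve_linear h12 p1); field.
have e00 : a00 a = (a02 a * a10 a - a03 a * a20 a) / a12 a by apply: (solve_linear h12 p2); field.
left; exists 1, (a02 a / a12 a), (a21 a), (a12 a),
  (a21 a * a02 a / a12 a + a12 a * a20 a / a21 a), 1, (a20 a / a21 a).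
split; [by field; rewrite h12 h21 | exact: oner_neq0 | exact: oner_neq0 |].
apply: has_DAB_pointwise => z w; ev_simpl.
by rewrite /Dfun /Afun /Bfun e00 e01 e10 e11 e03 e30; split; field; rewrite ?h12 ?h21.
Qed.

Lemma class_11_0_1_of_in_V a : in_V a -> a21 a != 0 -> a12 a = 0 -> class_11_0_1 a.
Proof.
move=> [[p1 _ _ p4 p5] si] h21 h12.
have e30 := superint_a30 si h21.
have e02 : a02 a = 0 by apply/eqP; rewrite -sqrf_eq0 superint_a02 // h12 mulr0.
have e03 : a03 a = 0 by apply: (solve_linear h21 p1); rewrite e02 h12; ring.
have e00 : a00 a = a01 a * a20 a / a21 a by apply: (solve_linear h21 p4); rewrite e02; field.
have e10 : a10 a = a11 a * a20 a / a21 a by apply: (solve_linear h21 p5); rewrite h12; field.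
have [r1 [r2 [e11 e01]]] := factor_quadratic (a11 a) (a01 a) h21.
exists (a21 a), (- a21 a * r1), 1, (- r2), 1, (a20 a / a21 a); split; first exact: oner_neq0.
apply: has_DAB_pointwise => z w; ev_simpl.
by rewrite /Dfun /Afun /Bfun e00 e10 e11 e01 e30 e02 e03 h12; split; field.
Qed.

Lemma class_11_0_1_of_in_V_a11 a :
  in_V a -> a21 a = 0 -> a12 a = 0 -> a11 a != 0 -> class_11_0_1 a.
Proof.
move=> [[p1 _ p3 _ p5] si] h21 h12 h11.
have e02 : a02 a = 0.
  by apply: (solve_linear (k := - a11 a) _ p1); [rewrite oppr_eq0 | rewrite h21 h12; ring].
have e20 : a20 a = 0.
  by apply: (solve_linear (k := - a11 a) _ p5); [rewrite oppr_eq0 | rewrite h21 h12; ring].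
have e30 := superint_a30_eq0 si h21 h12 e20 h11.
have e03 : a03 a = 0 := superint_a30_eq0 (superint_conj si) h12 h21 e02 h11.
have e00 : a00 a = a01 a * a10 a / a11 a by apply: (solve_linear h11 p3); rewrite e03; field.
exists (a11 a), (a01 a), 0, 1, 1, (a10 a / a11 a); split; first exact: oner_neq0.
apply: has_DAB_pointwise => z w; ev_simpl.
by rewrite /Dfun /Afun /Bfun e00 e02 e20 e30 e03 h21 h12; split; field.
Qed.

Lemma class_11_0_0_of_plucker a :
  plucker a -> a21 a = 0 -> a12 a = 0 -> a02 a = 0 -> a20 a != 0 -> class_11_0_0 a.
Proof.
move=> [_ p2 _ p4 p5] h21 h12 h02 h20.
have e11 : a11 a = 0.
  by apply: (solve_linear (k := - a20 a) _ p5); [rewrite oppr_eq0 | rewrite h21 h12; ring].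
have e01 : a01 a = 0.
  by apply: (solve_linear (k := - a20 a) _ p4); [rewrite oppr_eq0 | rewrite h02 h21; ring].
have e03 : a03 a = 0 by apply: (solve_linear h20 p2); rewrite h02 h12; ring.
have [r1 [r2 [e10 e00]]] := factor_quadratic (a10 a) (a00 a) h20.
exists (a20 a), (- a20 a * r1), 1, (- r2), (a30 a).
apply: has_DAB_pointwise => z w; ev_simpl.
by rewrite /Dfun /Afun /Bfun e10 e00 e11 e03 e01 h21 h12 h02; split; ring.
Qed.

Lemma class_0_11_0_of_in_V a : in_V a ->
  a21 a = 0 -> a12 a = 0 -> a11 a = 0 -> a20 a != 0 -> a02 a != 0 -> class_0_11_0 a.
Proof.
move=> [[_ p2 _ p4 _] /superint_pointwise si] h21 h12 h11 h20 h02.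
have e30 : a30 a = a01 a * a20 a / a02 a by apply: (solve_linear h02 p4); rewrite h21; field.
have e03 : a03 a = a02 a * a10 a / a20 a by apply: (solve_linear h20 p2); rewrite h12; field.
have e00 : a00 a = (a01 a ^+ 2 * a20 a + a02 a * a10 a ^+ 2) / (4%:R * a02 a * a20 a).
  (* Given e30 and e03, [si1 a 0 w] is affine in [w]. *)
  have [[s1 _ _] [s0 _ _]] := (si 0 1, si 0 0).
  apply: (solve_linear (k := 16%:R * a02 a * a20 a) (e := si1 a 0 1 - si1 a 0 0)).
  - by rewrite !mulf_neq0 ?pnatr_eq0.
  - by rewrite s1 s0 subrr.
  by unfold_si; rewrite h21 h12 h11 e30 e03; field; rewrite h02 h20.
pose s := sqrtC (- a02 a / a20 a).
have e02 : a02 a = - s ^+ 2 * a20 a by rewrite sqrtCK; field.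
have s_neq0 : s != 0 by apply: contra_neq h02 => s0; rewrite e02 s0 expr0n /= oppr0 mul0r.
exists 1, s, ((a10 a - a01 a / s) / (2%:R * a20 a)), (a20 a), (- s * a20 a),
  ((a10 a + a01 a / s) / 2%:R).
split; [ring | by rewrite !mulf_neq0 ?oppr_eq0 ?oner_eq0 |].
apply: has_DAB_pointwise => z w; ev_simpl.
by rewrite /Dfun /Afun /Bfun e00 e30 e03 e02 h21 h12 h11; split; field; rewrite s_neq0 h20.
Qed.

Lemma in_classes_linear a : in_V a ->
  a21 a = 0 -> a12 a = 0 -> a11 a = 0 -> a20 a = 0 -> a02 a = 0 -> in_classes a.
Proof.
move=> [[_ _ p3 _ _] /superint_pointwise si] h21 h12 h11 h20 h02.
have [s1 s2 _] := si 0 0.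
have pl : a03 a * a30 a = a01 a * a10 a.
  by apply: (solve_linear (oner_neq0 C) p3); rewrite h11; ring.
have e1 : a30 a * (a01 a ^+ 2 + a03 a * a10 a) = 0.
  apply: (solve_linear (k := - 2%:R) _ s1); first by rewrite oppr_eq0 pnatr_eq0.
  by unfold_si; rewrite h21 h12 h11 h20 h02; ring.
have e2 : a03 a * (a01 a * a30 a + a10 a ^+ 2) = 0.
  apply: (solve_linear (k := - 2%:R) _ s2); first by rewrite oppr_eq0 pnatr_eq0.
  by unfold_si; rewrite h21 h12 h11 h20 h02; ring.
have [[e01 e03] | [e10 e30] | [h01 h10 e03 e30]] := linear_case_solutions pl e1 e2.
- right; right; left; exists 0, 1, (a10 a), (a00 a), (a30 a).
  apply: has_DAB_pointwise => z w; ev_simpl.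
  by rewrite /Dfun /Afun /Bfun e01 e03 h21 h12 h11 h20 h02; split; ring.
- do 5 right; exists 0, 1, (a01 a), (a00 a), (a03 a).
  apply: has_DAB_pointwise => z w; ev_simpl.
  by rewrite /Dfun /Afun /Bfun /= e10 e30 h21 h12 h11 h20 h02; split; ring.
left; right; exists (a10 a), (a01 a), (a00 a); split=> //.
apply: has_DAB_pointwise => z w; ev_simpl.
by rewrite /Dfun /Afun /Bfun e03 e30 h21 h12 h11 h20 h02; split; ring.
Qed.

Lemma in_classes_of_in_V a : in_V a -> in_classes a.
Proof.
move=> Va; have [Pa _] := Va.
have [h21 | h21] := eqVneq (a21 a) 0; have [h12 | h12] := eqVneq (a12 a) 0.
- have [h11 | h11] := eqVneq (a11 a) 0; last by right; left; exact: class_11_0_1_of_in_V_a11.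
  have [h20 | h20] := eqVneq (a20 a) 0; have [h02 | h02] := eqVneq (a02 a) 0.
  + exact: in_classes_linear.
  + by do 5 right; exact: class_11_0_0_of_plucker (plucker_conj Pa) h12 h21 h20 h02.
  + by right; right; left; exact: class_11_0_0_of_plucker.
  + by do 3 right; left; exact: class_0_11_0_of_in_V.
- by do 4 right; left; exact: class_11_0_1_of_in_V (in_V_conj Va) h12 h21.
- by right; left; exact: class_11_0_1_of_in_V.
by left; exact: class_111_of_in_V.
Qed.

End Forward.

Theorem theorem4p5 (R : realType) (a : coords R[i]) :
  nonzero_coords a ->
  (in_V a <->
   (class_111 a \/ class_11_0_1 a \/ class_11_0_0 a \/ class_0_11_0 a \/
    class_1_0_11 a \/ class_0_0_11 a)).
Proof.
(* The equivalence holds on the whole affine cone, origin included. *)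
by move=> _; split; [exact: in_classes_of_in_V | exact: in_V_of_in_classes].
Qed.
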